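(* Let $L>0$, let $P\in H^2(0,L)$ be real-valued with $P(x)\ge P^0>0$ on $[0,L]$, and let $\theta_1,\dots,\theta_4\in\mathbb R$. Suppose there are constants $a,b>0$ with $(a+b-1)^2<4ab$ such that $\theta_1=\theta_3/b-a$, $\theta_2=\theta_4/b$, and suppose $\theta_1,\theta_3<0$, $\theta_2,\theta_4>0$. Let $\mathcal H=\{(w,v,\xi,\psi): w\in H^2(0,L),\ v\in H^1(0,L),\ \xi=v(L),\ \psi=v(0)\}$, $F[w,v]=\theta_1v(0)+\theta_2v'(0)+\theta_3w(0)+\theta_4w'(0)$, and $A(w,v,\xi,\psi)=(v,(Pw')',-w'(L),F[w,v])$ with domain $$D(A)=\{(w,v,\xi,\psi): w\in H^3(0,L),\ v\in H^2(0,L),\ \xi=v(L),\ \psi=v(0),\ (Pw')'(L)=-w'(L),\ (Pw')'(0)=F[w,v]\}.$$ Set $\alpha_1=\theta_2/(2P(0))$, $\alpha_2=-\theta_2\theta_3/(2\theta_4)$, and for $\gamma>0$ equip $\mathcal H$ with the inner product $$\begin{aligned}\langle z_1,z_2\rangle_{\mathcal H}:={}&\alpha_1\int_0^L\big[\gamma (Pw_1')'(P\bar w_2')'+Pw_1'\bar w_2'\big]\,dx+\alpha_1\gamma P(L)w_1'(L)\bar w_2'(L)+\alpha_2 w_1(0)\bar w_2(0)\\&+\alpha_1\int_0^L\big(\gamma P v_1'\bar v_2'+v_1\bar v_2\big)\,dx+\alpha_1P(L)\xi_1\bar\xi_2+\alpha_2\gamma\psi_1\bar\psi_2\\&+\tfrac12\big(\psi_1-2\alpha_1P(0)w_1'(0)+2\alpha_2w_1(0)\big)\big(\bar\psi_2-2\alpha_1P(0)\bar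 w_2'(0)+2\alpha_2\bar w_2(0)\big).\end{aligned}$$ Then for all sufficiently small $\gamma>0$ the operator $A$ is dissipative with respect to $\langle\cdot,\cdot\rangle_{\mathcal H}$, i.e. $\operatorname{Re}\langle z,Az\rangle_{\mathcal H}\le0$ for all $z\in D(A)$.
   Context: Prime denotes $d/dx$; functions are complex-valued and a bar denotes complex conjugation. *)

From HB Require Import structures.
From mathcomp Require Import all_boot all_order all_algebra.
From mathcomp Require Import all_classical all_reals all_analysis.
From mathcomp Require Import complex.
Import Order.TTheory GRing.Theory Num.Theory.

Set Implicit Arguments.
Unset Strict Implicit.
Unset Printing Implicit Defensive.

Local Open Scope ring_scope.
Local Open Scope classical_set_scope.
Local Open Scope complex_scope.

Section Defs.
Variable R : realType.

Definition cRe (z : R[i]) : R := complex.Re z.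
Definition cIm (z : R[i]) : R := complex.Im z.

Definition rint (a b : R) (f : R -> R) : R :=
  Rintegral lebesgue_measure `[a, b] f.

Definition cint (a b : R) (f : R -> R[i]) : R[i] :=
  complex.Complex (rint a b (fun x => cRe (f x))) (rint a b (fun x => cIm (f x))).

Definition L2 (L : R) (f : R -> R) : Prop :=
  measurable_fun `[0, L] f /\
  lebesgue_measure.-integrable `[0, L] (fun x => ((f x) ^+ 2)%:E).

(* Sobolev space H^k(0,L) for real functions, in the one–dimensional
   characterisation: d j is the (continuous representative of the) j-th weak
   derivative of f on [0,L]; d j is absolutely continuous with derivative
   d (j+1) for j < k (i.e. d j x = d j 0 + \int_0^x d (j+1)), and the top
   derivative d k lies in L^2(0,L).  f coincides with d 0 on [0,L]. *)
Definition rsob (k : nat) (L : R) (f : R -> R) (d : nat -> R -> R) : Prop :=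
  (forall x, 0 <= x <= L -> d 0%N x = f x) /\
  (forall j, (j < k)%N -> forall x, 0 <= x <= L ->
     d j x = d j 0 + rint 0 x (d j.+1)) /\
  L2 L (d k).

Definition csob (k : nat) (L : R) (f : R -> R[i]) (d : nat -> R -> R[i]) : Prop :=
  rsob k L (fun x => cRe (f x)) (fun j x => cRe (d j x)) /\
  rsob k L (fun x => cIm (f x)) (fun j x => cIm (d j x)).

(* (P f')' computed from derivative data (product rule):
   P' f' + P f''. *)
Definition PD (P : R -> R) (dP : nat -> R -> R) (df : nat -> R -> R[i]) (x : R) : R[i] :=
  (dP 1%N x)%:C * df 1%N x + (P x)%:C * df 2%N x.

Definition ipH (L : R) (P : R -> R) (dP : nat -> R -> R) (al1 al2 gam : R)
  (w1 : R -> R[i]) (dw1 : nat -> R -> R[i]) (v1 : R -> R[i]) (dv1 : nat -> R -> R[i])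
  (xi1 psi1 : R[i])
  (w2 : R -> R[i]) (dw2 : nat -> R -> R[i]) (v2 : R -> R[i]) (dv2 : nat -> R -> R[i])
  (xi2 psi2 : R[i]) : R[i] :=
  al1%:C * cint 0 L (fun x => gam%:C * PD P dP dw1 x * (PD P dP dw2 x)^*
                              + (P x)%:C * dw1 1%N x * (dw2 1%N x)^*)
  + (al1 * gam * P L)%:C * dw1 1%N L * (dw2 1%N L)^*
  + al2%:C * w1 0 * (w2 0)^*
  + al1%:C * cint 0 L (fun x => (gam * P x)%:C * dv1 1%N x * (dv2 1%N x)^*
                              + v1 x * (v2 x)^*)
  + (al1 * P L)%:C * xi1 * xi2^*
  + (al2 * gam)%:C * psi1 * psi2^*
  + (2^-1 : R)%:C *
      (psi1 - (2 * al1 * P 0)%:C * dw1 1%N 0 + (2 * al2)%:C * w1 0)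
      * (psi2 - (2 * al1 * P 0)%:C * dw2 1%N 0 + (2 * al2)%:C * w2 0)^*.

Definition Fbc (th1 th2 th3 th4 : R) (w : R -> R[i]) (dw : nat -> R -> R[i])
  (v : R -> R[i]) (dv : nat -> R -> R[i]) : R[i] :=
  th1%:C * v 0 + th2%:C * dv 1%N 0 + th3%:C * w 0 + th4%:C * dw 1%N 0.

End Defs.

(* Integrating by parts, the interior integrals of Re <z, Az> collapse to
   boundary values: the pairs ((Pw')', Pv') and (Pw', v) are products of
   absolutely continuous functions, and their contributions at x = L cancel
   against the boundary terms of the inner product because
   (Pw')'(L) = -w'(L).  What is left is, for the real and the imaginary part
   separately, a quadratic form in (v(0), v'(0), w(0), w'(0)) which for the
   chosen alpha_1, alpha_2 equals
     - (a v^2 - (a + b - 1) v t + b t^2) / 2 + gamma * (cross term),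
   with t = theta_2 w'(0) + theta_3 w(0) / b.  The first part is negative
   definite in (v, t) because (a + b - 1)^2 < 4ab, and the cross term is
   bounded above by a multiple of v^2 + t^2 (its v'(0)^2 coefficient is
   negative), so the form is nonpositive for small gamma.  Integration by
   parts for absolutely continuous functions comes from Fubini's theorem on
   the triangles {y < x} and {x <= y}. *)

From HB Require Import structures.
From mathcomp Require Import all_boot all_order all_algebra.
From mathcomp Require Import all_classical all_reals all_analysis.
From mathcomp Require Import complex measurable_realfun.
From mathcomp Require Import ring lra.
Import Order.TTheory GRing.Theory Num.Theory.
Import numFieldNormedType.Exports.

Local Open Scope classical_set_scope.
Local Open Scope ring_scope.

Section boundary_form.
Context {R : realFieldType}.

(* [p] stands for alpha_1 P(0), and [v v' w w'] for v(0), v'(0), w(0), w'(0). *)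
Definition boundary_form (th1 th2 th3 th4 p al2 gam v v' w w' : R) : R :=
  let F := th1 * v + th2 * v' + th3 * w + th4 * w' in
  - p * gam * F * v' - p * w' * v + al2 * w * v + al2 * gam * v * F
  + (v - 2 * p * w' + 2 * al2 * w) * (F - 2 * p * v' + 2 * al2 * v) / 2.

Lemma quadratic_form_ge [a b s : R] (v t : R) : 0 < a -> 0 < b -> s ^+ 2 < 4 * a * b ->
  (4 * a * b - s ^+ 2) / (4 * (a + b)) * (v ^+ 2 + t ^+ 2) <=
  a * v ^+ 2 - s * v * t + b * t ^+ 2.
Proof.
move=> a0 b0 hs; set k := _ / _.
have k_lt_a : k < a.
  rewrite ltr_pdivrMr; last lra.
  have : 0 <= s ^+ 2 by exact: sqr_ge0.
  have : 0 < a * a by exact: mulr_gt0.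
  lra.
have det_ge : s ^+ 2 <= 4 * (a - k) * (b - k).
  have e : 4 * k * (a + b) = 4 * a * b - s ^+ 2 by rewrite /k; field; lra.
  have : 0 <= k ^+ 2 by exact: sqr_ge0.
  nra.
have e : (a - k) * (a * v ^+ 2 - s * v * t + b * t ^+ 2 - k * (v ^+ 2 + t ^+ 2)) =
    ((a - k) * v - s / 2 * t) ^+ 2 + ((a - k) * (b - k) - s ^+ 2 / 4) * t ^+ 2.
  by field.
have : 0 <= (a - k) * (a * v ^+ 2 - s * v * t + b * t ^+ 2 - k * (v ^+ 2 + t ^+ 2)).
  by rewrite e addr_ge0 ?sqr_ge0 // mulr_ge0 ?sqr_ge0 //; lra.
rewrite pmulr_rge0; lra.
Qed.

Lemma cross_term_le (c1 c2 c3 c4 v v' t : R) :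
  (c1 * v + c2 * t + c3 * v') * (c4 * v - c3 / 2 * v') <=
  (`|c4 * c1| + `|c4 * c2| + (c4 - c1 / 2) ^+ 2 + c2 ^+ 2 / 4) * (v ^+ 2 + t ^+ 2).
Proof.
set C := (c4 - c1 / 2) * v - c2 / 2 * t.
have -> : (c1 * v + c2 * t + c3 * v') * (c4 * v - c3 / 2 * v') =
    c4 * c1 * v ^+ 2 + c4 * c2 * (v * t) + C ^+ 2 / 2 - (c3 * v' - C) ^+ 2 / 2.
  by rewrite /C; field.
have : 0 <= (c3 * v' - C) ^+ 2 by exact: sqr_ge0.
have : C ^+ 2 / 2 <= (c4 - c1 / 2) ^+ 2 * v ^+ 2 + c2 ^+ 2 / 4 * t ^+ 2.
  have : 0 <= ((c4 - c1 / 2) * v + c2 / 2 * t) ^+ 2 by exact: sqr_ge0.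
  rewrite /C; nra.
have : c4 * c1 * v ^+ 2 <= `|c4 * c1| * (v ^+ 2 + t ^+ 2).
  have : c4 * c1 <= `|c4 * c1| by exact: ler_norm.
  have := sqr_ge0 v; have := sqr_ge0 t; have := normr_ge0 (c4 * c1).
  nra.
have : c4 * c2 * (v * t) <= `|c4 * c2| * (v ^+ 2 + t ^+ 2).
  have vt : `|v * t| <= v ^+ 2 + t ^+ 2.
    rewrite normrM -[v ^+ 2]real_normK ?num_real // -[t ^+ 2]real_normK ?num_real //.
    have := sqr_ge0 (`|v| - `|t|); have := normr_ge0 v; have := normr_ge0 t.
    nra.
  have : c4 * c2 * (v * t) <= `|c4 * c2 * (v * t)| by exact: ler_norm.
  rewrite normrM; have := normr_ge0 (c4 * c2); nra.
have := sqr_ge0 v; have := sqr_ge0 t.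
have := mulr_ge0 (sqr_ge0 (c4 - c1 / 2)) (sqr_ge0 t).
have : 0 <= c2 ^+ 2 / 4 * v ^+ 2 by rewrite mulr_ge0 ?divr_ge0 ?sqr_ge0.
nra.
Qed.

Lemma boundary_form_nonpos [th1 th2 th3 th4 a b : R] : 0 < a -> 0 < b ->
  (a + b - 1) ^+ 2 < 4 * a * b -> th1 = th3 / b - a -> th2 = th4 / b -> 0 < th4 ->
  exists g0, 0 < g0 /\ forall gam, 0 < gam <= g0 -> forall v v' w w',
    boundary_form th1 th2 th3 th4 (th2 / 2) (- (th2 * th3) / (2 * th4)) gam v v' w w'
      <= 0.
Proof.
move=> a0 b0 hab th1E th2E th4_gt0.
set s := a + b - 1 in hab; set al2 := - (th2 * th3) / (2 * th4).
pose k := (4 * a * b - s ^+ 2) / (4 * (a + b)).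
pose M := `|al2 * th1| + `|al2 * b| + (al2 - th1 / 2) ^+ 2 + b ^+ 2 / 4.
have k_gt0 : 0 < k by apply: divr_gt0; lra.
have M_gt0 : 0 < M.
  have : 0 < b ^+ 2 / 4 by rewrite divr_gt0 ?exprn_gt0.
  have := normr_ge0 (al2 * th1); have := normr_ge0 (al2 * b).
  have := sqr_ge0 (al2 - th1 / 2).
  rewrite /M; lra.
exists (k / (2 * M)); split; first by rewrite divr_gt0 // mulr_gt0.
move=> gam /andP[gam_gt0 gam_le] v v' w w'.
pose t := th2 * w' + th3 * w / b.
have -> : boundary_form th1 th2 th3 th4 (th2 / 2) al2 gam v v' w w' =
    - (a * v ^+ 2 - s * v * t + b * t ^+ 2) / 2 +
    gam * ((th1 * v + b * t + th2 * v') * (al2 * v - th2 / 2 * v')).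
  rewrite /boundary_form /t /al2 /s th1E th2E; field.
  by rewrite !lt0r_neq0.
have := quadratic_form_ge v t a0 b0 hab.
have := ler_wpM2l (ltW gam_gt0) (cross_term_le th1 b th2 al2 v v' t).
have gamM : gam * M <= k / 2.
  by move: gam_le; rewrite ler_pdivlMr ?mulr_gt0 //; lra.
have := ler_wpM2r (addr_ge0 (sqr_ge0 v) (sqr_ge0 t)) gamM.
rewrite -/M -/k; nra.
Qed.

End boundary_form.

Section real_integrable.
Context {R : realType} {D : set (measurableTypeR R)}.
Notation mu := (@lebesgue_measure R).
Hypothesis mD : measurable D.

Lemma EFin_Rintegral (f : R -> R) : mu.-integrable D (EFin \o f) ->
  (\int[mu]_(x in D) f x)%:E = (\int[mu]_(x in D) (f x)%:E)%E.
Proof. by move=> i; rewrite fineK//; exact: integrable_fin_num. Qed.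

Lemma integrableZl_EFin (k : R) {f : R -> R} : mu.-integrable D (EFin \o f) ->
  mu.-integrable D (EFin \o (fun x => k * f x)).
Proof.
move=> i; apply: (eq_integrable mD _ _ _ (integrableZl mD k i)) => x _.
by rewrite /= EFinM.
Qed.

Lemma integrableD_EFin {f g : R -> R} : mu.-integrable D (EFin \o f) ->
  mu.-integrable D (EFin \o g) -> mu.-integrable D (EFin \o (fun x => f x + g x)).
Proof.
move=> i j; apply: (eq_integrable mD _ _ _ (integrableD mD i j)) => x _.
by rewrite /= EFinD.
Qed.

End real_integrable.

Section partial_integral.
Context {R : realType}.
Notation mu := (@lebesgue_measure R).

Lemma integrable_ifT {c : R -> bool} {w : R -> R} :
  measurable_fun setT c -> mu.-integrable setT (EFin \o w) ->
  mu.-integrable setT (EFin \o (fun y => if c y then w y else 0)).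
Proof.
move=> mc iw; apply: (le_integrable measurableT _ _ iw) => //.
  apply/measurable_EFinP/measurable_fun_ifT => //.
  by apply/measurable_EFinP; exact: measurable_int iw.
by move=> y _ /=; case: ifP => _; rewrite ?normr0 ?lee_fin.
Qed.

Context {u w : R -> R} {c : R -> R -> bool}.
Hypotheses (iu : mu.-integrable setT (EFin \o u))
  (iw : mu.-integrable setT (EFin \o w))
  (mc : measurable_fun setT (fun z : R * R => c z.1 z.2)).

Let meas_u : measurable_fun setT u.
Proof. by apply/measurable_EFinP; exact: measurable_int iu. Qed.

Let meas_w : measurable_fun setT w.
Proof. by apply/measurable_EFinP; exact: measurable_int iw. Qed.

Let h (z : R * R) := (u z.1 * (if c z.1 z.2 then w z.2 else 0))%:E.

Let integrable_h : (mu \x mu)%E.-integrable setT h.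
Proof.
have muw : measurable_fun setT (fun z : R * R => u z.1 * w z.2).
  by apply: measurable_funM; apply: measurableT_comp.
have iuw : (mu \x mu)%E.-integrable setT (fun z : R * R => (u z.1 * w z.2)%:E).
  apply/integrable12ltyP; first exact/measurable_EFinP.
  under eq_integral do under eq_integral do rewrite /= normrM EFinM.
  have split_x x : (\int[mu]_y (`|u x|%:E * `|w y|%:E) =
      `|u x|%:E * \int[mu]_y `|w y|%:E)%E.
    by rewrite ge0_integralZl//; apply/measurable_EFinP; apply: measurableT_comp.
  under eq_integral do rewrite split_x.
  rewrite ge0_integralZr//; last 2 first.
  - by apply/measurable_EFinP; apply: measurableT_comp.
  - exact: integral_ge0.
  apply: lte_mul_pinfty; first exact: integral_ge0.
  - rewrite ge0_fin_numE; first by case/integrableP: iu.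
    exact: integral_ge0.
  - by case/integrableP: iw.
apply: (le_integrable measurableT _ _ iuw).
  apply/measurable_EFinP/measurable_funM; first exact: measurableT_comp.
  by apply: measurable_fun_ifT => //; exact: measurableT_comp.
by move=> z _ /=; case: ifP => _; rewrite ?mulr0 ?normr0 ?lee_fin.
Qed.

Let integral_h_section x :
  (\int[mu]_y h (x, y) = (u x * \int[mu]_y (if c x y then w y else 0))%:E)%E.
Proof.
have iwx := integrable_ifT (measurable_fun_pair2 x mc) iw.
by rewrite -RintegralZl// EFin_Rintegral//; exact: integrableZl_EFin.
Qed.

Let integral_h_fibre y :
  (\int[mu]_x h (x, y) = (w y * \int[mu]_x (if c x y then u x else 0))%:E)%E.
Proof.
have iuy := integrable_ifT (measurable_fun_pair1 y mc) iu.
rewrite -RintegralZl// EFin_Rintegral//; last exact: integrableZl_EFin.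
by apply: eq_integral => x _; rewrite /h /=; case: ifP; rewrite ?mulr0// mulrC.
Qed.

Lemma integrable_mul_partial :
  mu.-integrable setT (EFin \o fun x => u x * \int[mu]_y (if c x y then w y else 0)).
Proof.
apply: (eq_integrable measurableT _ _ _ (integrable_fubini_F integrable_h)) => x _.
by rewrite /fubini_F integral_h_section.
Qed.

Lemma fubini_mul_partial :
  \int[mu]_x (u x * \int[mu]_y (if c x y then w y else 0)) =
  \int[mu]_y (w y * \int[mu]_x (if c x y then u x else 0)).
Proof.
congr fine; transitivity (\int[mu]_x \int[mu]_y h (x, y))%E.
  by apply: eq_integral => x _; rewrite integral_h_section.
by rewrite (Fubini integrable_h); apply: eq_integral => y _; rewrite integral_h_fibre.
Qed.

End partial_integral.

Section fubini_triangles.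
Context {R : realType}.
Notation mu := (@lebesgue_measure R).

Lemma fubini_triangles (u w : R -> R) :
  mu.-integrable setT (EFin \o u) -> mu.-integrable setT (EFin \o w) ->
  \int[mu]_x (u x * \int[mu]_y (if y < x then w y else 0)) +
  \int[mu]_y (w y * \int[mu]_x (if x <= y then u x else 0)) =
  \int[mu]_x u x * \int[mu]_y w y.
Proof.
move=> iu iw.
have mlt : measurable_fun setT (fun z : R * R => z.2 < z.1).
  by apply: measurable_fun_ltr; [exact: measurable_snd | exact: measurable_fst].
have mgt : measurable_fun setT (fun z : R * R => z.1 < z.2).
  by apply: measurable_fun_ltr; [exact: measurable_fst | exact: measurable_snd].
have mle : measurable_fun setT (fun z : R * R => z.2 <= z.1).
  by apply: measurable_fun_ler; [exact: measurable_snd | exact: measurable_fst].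
rewrite (fubini_mul_partial iu iw mlt) -RintegralD//; last 2 first.
- exact: integrable_mul_partial iw iu mgt.
- exact: integrable_mul_partial iw iu mle.
rewrite -RintegralZl//; apply: eq_Rintegral => y _.
have mlty : measurable_fun setT (fun x : R => y < x).
  by apply: measurable_fun_ltr => //; exact: measurable_cst.
have mley : measurable_fun setT (fun x : R => x <= y).
  by apply: measurable_fun_ler => //; exact: measurable_cst.
rewrite -mulrDr mulrC -RintegralD//; last 2 first.
- exact: integrable_ifT mlty iu.
- exact: integrable_ifT mley iu.
congr (_ * _); apply: eq_Rintegral => x _.
by rewrite leNgt; case: ifP; rewrite ?addr0 ?add0r.
Qed.

End fubini_triangles.

Section primitive.
Context {R : realType}.
Notation mu := (@lebesgue_measure R).

Definition primitive (b : R) (F f : R -> R) :=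
  mu.-integrable `[0, b] (EFin \o f) /\
  forall x, 0 <= x <= b -> F x = F 0 + \int[mu]_(t in `[0, x]) f t.

Lemma integrable_restrict (b : R) (f : R -> R) :
  mu.-integrable `[0, b] (EFin \o f) ->
  mu.-integrable setT (EFin \o (f \_ `[0, b])).
Proof.
move=> i; rewrite -restrict_EFin.
exact/(@integrable_mkcond _ _ _ mu _ (EFin \o f) (measurable_itv _)).
Qed.

Lemma primitive_lt [b : R] [F f : R -> R] [x : R] : primitive b F f -> 0 <= x <= b ->
  F x = F 0 + \int[mu]_y (if y < x then (f \_ `[0, b]) y else 0).
Proof.
move=> [if_ pF] /[dup] xb /andP[x0 xb']; rewrite pF//; congr (_ + _).
rewrite -Rintegral_itv_bndo_bndc; last first.
  by apply: integrableS if_ => //; apply: subset_itvl; rewrite bnd_simp.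
rewrite Rintegral_mkcond; apply: eq_Rintegral => y _.
rewrite !patchE !mem_setE !in_itv /=.
case: (ltP y x) => yx; case: (leP 0 y) => y0 //=.
by rewrite (ltW (lt_le_trans yx xb')).
Qed.

Lemma primitive_le [b : R] [F f : R -> R] [x : R] : primitive b F f -> 0 <= x <= b ->
  F x = F 0 + \int[mu]_y (if y <= x then (f \_ `[0, b]) y else 0).
Proof.
move=> [_ pF] /[dup] xb /andP[x0 xb']; rewrite pF//; congr (_ + _).
rewrite Rintegral_mkcond; apply: eq_Rintegral => y _.
rewrite !patchE !mem_setE !in_itv /=.
case: (leP y x) => yx; case: (leP 0 y) => y0 //=.
by rewrite (le_trans yx xb').
Qed.

Lemma primitive_integrableMl [b : R] [F f g : R -> R] : 0 <= b ->
  primitive b F f -> mu.-integrable `[0, b] (EFin \o g) ->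
  mu.-integrable `[0, b] (EFin \o fun x => F x * g x).
Proof.
move=> b0 [if_ pF] ig.
pose Fc x := F 0 + parameterized_integral mu 0 x f.
have cFc : {within `[0, b], continuous Fc}.
  move=> x; apply: cvgD; first exact: cvg_cst.
  exact: parameterized_integral_continuous b0 if_ x.
have eFc : {in `[0, b]%classic, Fc =1 F}.
  by move=> x /[!inE] /= xb; rewrite [RHS]pF.
have mF : measurable_fun `[0, b] F.
  apply: eq_measurable_fun eFc _.
  exact: subspace_continuous_measurable_fun (measurable_itv _) cFc.
have bF : [bounded F x | x in `[0, b]%classic].
  have [M [Mr HM]] := compact_bounded (continuous_compact cFc (@segment_compact _ 0 b)).
  exists M; split => // N MN x xb; rewrite /= -eFc; last by rewrite inE.
  by apply: HM MN _ _; exists x.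
have := @integrableMr _ _ _ mu _ (measurable_itv _) F _ mF bF ig.
by apply: eq_integrable => // x _; rewrite /= EFinM.
Qed.

Lemma primitive_integrableMr [b : R] [F f g : R -> R] : 0 <= b ->
  primitive b F f -> mu.-integrable `[0, b] (EFin \o g) ->
  mu.-integrable `[0, b] (EFin \o fun x => g x * F x).
Proof.
move=> b0 pF ig.
have := primitive_integrableMl b0 pF ig.
by apply: eq_integrable => // x _; rewrite /= mulrC.
Qed.

Lemma primitive_by_parts [b : R] [F G f g : R -> R] : 0 <= b ->
  primitive b F f -> primitive b G g ->
  \int[mu]_(x in `[0, b]) (F x * g x) + \int[mu]_(x in `[0, b]) (f x * G x) =
  F b * G b - F 0 * G 0.
Proof.
move=> b0 pF pG.
rewrite -RintegralD//; last 2 first.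
- exact: primitive_integrableMl b0 pF pG.1.
- exact: primitive_integrableMr b0 pG pF.1.
pose fb := f \_ `[0, b]; pose gb := g \_ `[0, b].
pose A x := \int[mu]_y (if y < x then fb y else 0).
pose B y := \int[mu]_x (if x <= y then gb x else 0).
have ifb : mu.-integrable setT (EFin \o fb) by exact: integrable_restrict pF.1.
have igb : mu.-integrable setT (EFin \o gb) by exact: integrable_restrict pG.1.
have mlt : measurable_fun setT (fun z : R * R => z.2 < z.1).
  by apply: measurable_fun_ltr; [exact: measurable_snd | exact: measurable_fst].
have mle : measurable_fun setT (fun z : R * R => z.2 <= z.1).
  by apply: measurable_fun_ler; [exact: measurable_snd | exact: measurable_fst].
have igA : mu.-integrable setT (EFin \o fun x => gb x * A x).
  exact: integrable_mul_partial igb ifb mlt.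
have ifB : mu.-integrable setT (EFin \o fun y => fb y * B y).
  exact: integrable_mul_partial ifb igb mle.
have bb : 0 <= b <= b by rewrite b0 lexx.
have Fb : F b = F 0 + \int[mu]_x fb x by rewrite -Rintegral_mkcond; exact: pF.2.
have Gb : G b = G 0 + \int[mu]_x gb x by rewrite -Rintegral_mkcond; exact: pG.2.
rewrite Rintegral_mkcond.
transitivity (\int[mu]_x ((F 0 * gb x + G 0 * fb x) + (gb x * A x + fb x * B x))).
  apply: eq_Rintegral => x _; rewrite /fb /gb !patchE.
  case: ifP => [xb|_]; last by rewrite !mulr0 !mul0r !addr0.
  rewrite mem_setE /= in_itv /= in xb.
  by rewrite (primitive_lt pF xb) (primitive_le pG xb) /A /B /fb /gb; ring.
have iFg := integrableZl_EFin measurableT (F 0) igb.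
have iGf := integrableZl_EFin measurableT (G 0) ifb.
rewrite !RintegralD//; try exact: integrableD_EFin.
rewrite !RintegralZl// fubini_triangles// Fb Gb; ring.
Qed.

Lemma primitiveS [b x : R] [F f : R -> R] : 0 <= x <= b ->
  primitive b F f -> primitive x F f.
Proof.
move=> /andP[x0 xb] [if_ pF]; split.
  by apply: integrableS if_ => //; apply: subset_itvl; rewrite bnd_simp.
by move=> y /andP[y0 yx]; rewrite pF// y0 (le_trans yx xb).
Qed.

Lemma primitiveM [b : R] [F G f g : R -> R] : 0 <= b ->
  primitive b F f -> primitive b G g ->
  primitive b (fun x => F x * G x) (fun x => F x * g x + f x * G x).
Proof.
move=> b0 pF pG.
have iFg := primitive_integrableMl b0 pF pG.1.
have ifG := primitive_integrableMr b0 pG pF.1.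
split; first exact (integrableD_EFin (measurable_itv _) iFg ifG).
move=> x /[dup] xb /andP[x0 _]; rewrite RintegralD//; last 2 first.
- exact: primitive_integrableMl x0 (primitiveS xb pF) (primitiveS xb pG).1.
- exact: primitive_integrableMr x0 (primitiveS xb pG) (primitiveS xb pF).1.
by rewrite (primitive_by_parts x0 (primitiveS xb pF) (primitiveS xb pG)); ring.
Qed.

Lemma eq_primitive [b : R] [F F' f : R -> R] :
  (forall x, 0 <= x <= b -> F x = F' x) ->
  primitive b F f -> primitive b F' f.
Proof.
move=> FF' [if_ pF]; split => // x xb.
have [x0 xb'] := andP xb.
by rewrite -!FF' ?lexx ?(le_trans x0 xb')//; exact: pF.
Qed.

End primitive.

Section sobolev.
Context {R : realType}.
Notation mu := (@lebesgue_measure R).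

Lemma integrable_cst_itv (a b c : R) : mu.-integrable `[a, b] (EFin \o cst c).
Proof.
apply: continuous_compact_integrable; first exact: segment_compact.
by move=> x; exact: cvg_cst.
Qed.

Lemma L2_integrable [L : R] [f : R -> R] :
  L2 L f -> mu.-integrable `[0, L] (EFin \o f).
Proof.
move=> [mf if2].
have i1f2 := integrableD_EFin (measurable_itv _) (integrable_cst_itv 0 L 1) if2.
apply: le_integrable i1f2 => //; first exact/measurable_EFinP.
move=> x _ /=; rewrite lee_fin [X in _ <= X]ger0_norm; last by rewrite addr_ge0 ?sqr_ge0.
rewrite -[_ ^+ 2]real_normK ?num_real //.
have : 0 <= `|f x| by exact: normr_ge0.
nra.
Qed.

Lemma rsob_primitive [k : nat] [L : R] [f : R -> R] [d : nat -> R -> R] [j : nat] :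
  0 <= L -> rsob k L f d -> (j < k)%N -> primitive L (d j) (d j.+1).
Proof.
move=> L0 [_ [pd /L2_integrable idk]].
suff int_d m : (m <= k)%N -> mu.-integrable `[0, L] (EFin \o d (k - m)%N).
  move=> jk; split; last exact: pd.
  by rewrite -(subKn jk); apply/int_d/leq_subr.
elim: m => [_|m IHm mk]; first by rewrite subn0.
have km : (k - m = (k - m.+1).+1)%N by rewrite subnSK.
have pdm : primitive L (d (k - m.+1)%N) (d (k - m)%N).
  by split; [apply: IHm; exact: ltnW | rewrite km; apply: pd; rewrite subnSK ?leq_subr].
have := primitive_integrableMl L0 pdm (integrable_cst_itv 0 L 1).
by apply: eq_integrable => // x _; rewrite /= mulr1.
Qed.

Lemma rsob_primitive_fun [k : nat] [L : R] [f : R -> R] [d : nat -> R -> R] :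
  0 <= L -> rsob k L f d -> (0 < k)%N -> primitive L f (d 1%N).
Proof.
move=> L0 hf k0; apply: eq_primitive (rsob_primitive L0 hf k0).
exact: hf.1.
Qed.

End sobolev.

Section complex_primitive.
Context {R : realType}.
Notation mu := (@lebesgue_measure R).
Local Open Scope complex_scope.

Lemma cReD (x y : R[i]) : cRe (x + y) = cRe x + cRe y.
Proof. by case: x; case: y. Qed.
Lemma cImD (x y : R[i]) : cIm (x + y) = cIm x + cIm y.
Proof. by case: x; case: y. Qed.
Lemma cReN (x : R[i]) : cRe (- x) = - cRe x.
Proof. by case: x. Qed.
Lemma cImN (x : R[i]) : cIm (- x) = - cIm x.
Proof. by case: x. Qed.
Lemma cReM (x y : R[i]) : cRe (x * y) = cRe x * cRe y - cIm x * cIm y.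
Proof. by case: x; case: y. Qed.
Lemma cImM (x y : R[i]) : cIm (x * y) = cRe x * cIm y + cIm x * cRe y.
Proof. by case: x; case: y. Qed.
Lemma cReC (c : R) : cRe c%:C = c.
Proof. by []. Qed.
Lemma cImC (c : R) : cIm c%:C = 0.
Proof. by []. Qed.
Lemma cReJ (x : R[i]) : cRe x^* = cRe x.
Proof. by case: x. Qed.
Lemma cImJ (x : R[i]) : cIm x^* = - cIm x.
Proof. by case: x. Qed.
Lemma cRe_cint (a b : R) (f : R -> R[i]) :
  cRe (cint a b f) = rint a b (fun x => cRe (f x)).
Proof. by []. Qed.
Lemma cIm_cint (a b : R) (f : R -> R[i]) :
  cIm (cint a b f) = rint a b (fun x => cIm (f x)).
Proof. by []. Qed.

Definition cE := (cReD, cImD, cReN, cImN, cReM, cImM, cReC, cImC, cReJ, cImJ,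
  cRe_cint, cIm_cint).

Lemma cRe_mulJ (x y : R[i]) : cRe (x * y^*) = cRe x * cRe y + cIm x * cIm y.
Proof. by rewrite !cE; ring. Qed.

Definition cprimitive (b : R) (F f : R -> R[i]) :=
  primitive b (fun x => cRe (F x)) (fun x => cRe (f x)) /\
  primitive b (fun x => cIm (F x)) (fun x => cIm (f x)).

Lemma csob_cprimitive [k : nat] [L : R] [f : R -> R[i]] [d : nat -> R -> R[i]]
  [j : nat] : 0 <= L -> csob k L f d -> (j < k)%N -> cprimitive L (d j) (d j.+1).
Proof.
move=> L0 [hr hi] jk.
by split; [exact: rsob_primitive L0 hr jk | exact: rsob_primitive L0 hi jk].
Qed.

Lemma csob_cprimitive_fun [k : nat] [L : R] [f : R -> R[i]] [d : nat -> R -> R[i]] :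
  0 <= L -> csob k L f d -> (0 < k)%N -> cprimitive L f (d 1%N).
Proof.
move=> L0 [hr hi] k0.
by split; [exact: rsob_primitive_fun L0 hr k0 | exact: rsob_primitive_fun L0 hi k0].
Qed.

Lemma cprimitiveMl [b : R] [p p' : R -> R] [F f : R -> R[i]] : 0 <= b ->
  primitive b p p' -> cprimitive b F f ->
  cprimitive b (fun x => (p x)%:C * F x) (fun x => (p' x)%:C * F x + (p x)%:C * f x).
Proof.
move=> b0 pp [pFr pFi].
have eRe x : cRe ((p x)%:C * F x) = p x * cRe (F x) by rewrite !cE; ring.
have eIm x : cIm ((p x)%:C * F x) = p x * cIm (F x) by rewrite !cE; ring.
have eRe' x : cRe ((p' x)%:C * F x + (p x)%:C * f x) =
    p x * cRe (f x) + p' x * cRe (F x) by rewrite !cE; ring.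
have eIm' x : cIm ((p' x)%:C * F x + (p x)%:C * f x) =
    p x * cIm (f x) + p' x * cIm (F x) by rewrite !cE; ring.
split; cbv beta.
  by rewrite (funext eRe) (funext eRe'); exact: primitiveM.
by rewrite (funext eIm) (funext eIm'); exact: primitiveM.
Qed.

Lemma integrable_cRe_mulJ [b : R] [F f g : R -> R[i]] : 0 <= b ->
  cprimitive b F f ->
  mu.-integrable `[0, b] (EFin \o fun x => cRe (g x)) ->
  mu.-integrable `[0, b] (EFin \o fun x => cIm (g x)) ->
  mu.-integrable `[0, b] (EFin \o fun x => cRe (F x * (g x)^*)) /\
  mu.-integrable `[0, b] (EFin \o fun x => cRe (g x * (F x)^*)).
Proof.
move=> b0 [pFr pFi] igr igi.
have iFg := integrableD_EFin (measurable_itv _)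
  (primitive_integrableMl b0 pFr igr) (primitive_integrableMl b0 pFi igi).
have igF := integrableD_EFin (measurable_itv _)
  (primitive_integrableMr b0 pFr igr) (primitive_integrableMr b0 pFi igi).
by rewrite !(funext (fun x => cRe_mulJ _ _)).
Qed.

Lemma cprimitive_by_parts [b : R] [F G f g : R -> R[i]] : 0 <= b ->
  cprimitive b F f -> cprimitive b G g ->
  rint 0 b (fun x => cRe (F x * (g x)^*)) + rint 0 b (fun x => cRe (f x * (G x)^*)) =
  cRe (F b * (G b)^* - F 0 * (G 0)^*).
Proof.
move=> b0 [pFr pFi] [pGr pGi].
have iFgr := primitive_integrableMl b0 pFr pGr.1.
have iFgi := primitive_integrableMl b0 pFi pGi.1.
have ifGr := primitive_integrableMr b0 pGr pFr.1.
have ifGi := primitive_integrableMr b0 pGi pFi.1.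
rewrite /rint !(funext (fun x => cRe_mulJ _ _)) !RintegralD//.
have := primitive_by_parts b0 pFr pGr; have := primitive_by_parts b0 pFi pGi.
rewrite !cE; lra.
Qed.

End complex_primitive.

Section boundary_identity.
Context {R : realType}.
Local Open Scope complex_scope.

Lemma rint_eqZD [l r : R] (k : R) [h f g : R -> R] :
  (forall x, h x = k * f x + g x) ->
  (@lebesgue_measure R).-integrable `[l, r] (EFin \o f) ->
  (@lebesgue_measure R).-integrable `[l, r] (EFin \o g) ->
  rint l r h = k * rint l r f + rint l r g.
Proof.
move=> /funext-> if_ ig.
by rewrite /rint RintegralD ?RintegralZl//; exact: integrableZl_EFin.
Qed.

Lemma cRe_ipH_boundary (L : R) (P : R -> R) (dP : nat -> R -> R)
  (al1 al2 gam th1 th2 th3 th4 : R) (w : R -> R[i]) (dw : nat -> R -> R[i])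
  (v : R -> R[i]) (dv dq : nat -> R -> R[i]) :
  0 <= L -> rsob 2 L P dP -> csob 3 L w dw -> csob 2 L v dv ->
  PD P dP dw L = - dw 1%N L -> PD P dP dw 0 = Fbc th1 th2 th3 th4 w dw v dv ->
  csob 1 L (PD P dP dw) dq ->
  cRe (ipH L P dP al1 al2 gam w dw v dv (v L) (v 0)
         v dv (PD P dP dw) dq (- dw 1%N L) (Fbc th1 th2 th3 th4 w dw v dv)) =
  boundary_form th1 th2 th3 th4 (al1 * P 0) al2 gam
    (cRe (v 0)) (cRe (dv 1%N 0)) (cRe (w 0)) (cRe (dw 1%N 0)) +
  boundary_form th1 th2 th3 th4 (al1 * P 0) al2 gam
    (cIm (v 0)) (cIm (dv 1%N 0)) (cIm (w 0)) (cIm (dw 1%N 0)).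
Proof.
move=> L0 hP hw hv hL h0 hq.
have pP := rsob_primitive_fun L0 hP isT.
have pQ : cprimitive L (PD P dP dw) (dq 1%N) := csob_cprimitive_fun L0 hq isT.
have pG : cprimitive L (fun x => (P x)%:C * dv 1%N x) (PD P dP dv).
  exact: cprimitiveMl L0 pP (csob_cprimitive L0 hv (isT : (1 < 2)%N)).
have pB : cprimitive L (fun x => (P x)%:C * dw 1%N x) (PD P dP dw).
  exact: cprimitiveMl L0 pP (csob_cprimitive L0 hw (isT : (1 < 3)%N)).
have pV : cprimitive L v (dv 1%N) := csob_cprimitive_fun L0 hv isT.
have [iQG _] := integrable_cRe_mulJ L0 pQ pG.1.1 pG.2.1.
have [iBV _] := integrable_cRe_mulJ L0 pB pV.1.1 pV.2.1.
have [_ iqG] := integrable_cRe_mulJ L0 pG pQ.1.1 pQ.2.1.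
have [_ ibV] := integrable_cRe_mulJ L0 pV pB.1.1 pB.2.1.
have int_w : rint 0 L (fun x => cRe (gam%:C * PD P dP dw x * (PD P dP dv x)^*
                                  + (P x)%:C * dw 1%N x * (dv 1%N x)^*)) =
    gam * rint 0 L (fun x => cRe (PD P dP dw x * (PD P dP dv x)^*))
    + rint 0 L (fun x => cRe ((P x)%:C * dw 1%N x * (dv 1%N x)^*)).
  by apply: rint_eqZD iQG iBV => x; rewrite !cE; ring.
(* By parts, the interior integrals of the v-component are boundary terms
   minus those of the w-component, so all interior integrals cancel. *)
have int_v : rint 0 L (fun x => cRe ((gam * P x)%:C * dv 1%N x * (dq 1%N x)^*
                                  + v x * (PD P dP dw x)^*)) =
    gam * (cRe (PD P dP dw L * ((P L)%:C * dv 1%N L)^*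
                - PD P dP dw 0 * ((P 0)%:C * dv 1%N 0)^*)
           - rint 0 L (fun x => cRe (PD P dP dw x * (PD P dP dv x)^*)))
    + (cRe ((P L)%:C * dw 1%N L * (v L)^* - (P 0)%:C * dw 1%N 0 * (v 0)^*)
       - rint 0 L (fun x => cRe ((P x)%:C * dw 1%N x * (dv 1%N x)^*))).
  rewrite -(cprimitive_by_parts L0 pQ pG) -(cprimitive_by_parts L0 pB pV).
  rewrite (rint_eqZD gam _ iqG ibV); first ring.
  by move=> x; rewrite !cE; ring.
rewrite /ipH !cE int_w int_v hL h0 /Fbc /boundary_form !cE; ring.
Qed.

End boundary_identity.

Local Open Scope complex_scope.

Theorem lemma2p9 (R : realType) (L : R) (P : R -> R) (dP : nat -> R -> R) (P0 : R)
  (th1 th2 th3 th4 a b : R) :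
  0 < L ->
  rsob 2 L P dP ->
  0 < P0 -> (forall x, 0 <= x <= L -> P0 <= P x) ->
  0 < a -> 0 < b -> (a + b - 1) ^+ 2 < 4 * a * b ->
  th1 = th3 / b - a -> th2 = th4 / b ->
  th1 < 0 -> th3 < 0 -> 0 < th2 -> 0 < th4 ->
  let al1 := th2 / (2 * P 0) in
  let al2 := - (th2 * th3) / (2 * th4) in
  exists gam0 : R, 0 < gam0 /\
    forall gam : R, 0 < gam <= gam0 ->
    forall (w : R -> R[i]) (dw : nat -> R -> R[i])
           (v : R -> R[i]) (dv : nat -> R -> R[i]),
      (* z = (w, v, v(L), v(0)) in D(A) *)
      csob 3 L w dw -> csob 2 L v dv ->
      PD P dP dw L = - dw 1%N L ->
      PD P dP dw 0 = Fbc th1 th2 th3 th4 w dw v dv ->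
      (* dq : derivative data of the H^1 function (P w')' *)
      forall dq : nat -> R -> R[i], csob 1 L (PD P dP dw) dq ->
      (* Re < z, A z >_H <= 0, with A z = (v, (P w')', -w'(L), F[w,v]) *)
      cRe (ipH L P dP al1 al2 gam
             w dw v dv (v L) (v 0)
             v dv (PD P dP dw) dq (- dw 1%N L) (Fbc th1 th2 th3 th4 w dw v dv))
        <= 0.
Proof.
move=> L_gt0 hP P0_gt0 P_ge a_gt0 b_gt0 hab th1E th2E _ _ _ th4_gt0 al1 al2.
have P_0_gt0 : 0 < P 0 by apply: lt_le_trans P0_gt0 (P_ge 0 _); rewrite lexx ltW.
have al1P0 : al1 * P 0 = th2 / 2 by rewrite /al1; field; rewrite lt0r_neq0.
have [gam0 [gam0_gt0 form_le0]] := boundary_form_nonpos a_gt0 b_gt0 hab th1E th2E th4_gt0.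
exists gam0; split => // gam gam_small w dw v dv hw hv hL h0 dq hq.
have L_ge0 := ltW L_gt0.
rewrite cRe_ipH_boundary // al1P0.
by rewrite -[0]addr0 lerD ?form_le0.
Qed.
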